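(* Let $\mathcal{G}=(\mathcal{V},\mathcal{E})$ be a finite tree with root $r$, edges oriented away from $r$, and incidence matrix $\Omega$. Let $f:[0,1]\to\mathcal{P}(\mathcal{V})$ be continuously differentiable with tails $F(t)_x$. Put $s(t)=\sum_{x\in\mathcal{V}}|\partial_t F(t)_x|$. (i) For every $t\in[0,1]$, $s(t)=|\dot f|_{W_1}(t)$. (ii) Suppose moreover that $f$ is a constant speed $W_1$-geodesic with $f(0)\neq f(1)$. Then $s(t)=W_1(f(0),f(1))>0$ for all $t$. Define the constant speed solution by $$v(t)_k=\operatorname{sign}(\partial_tF(t)_{\lceil k\rceil})\,s(t),\qquad g(t)_k=|\partial_tF(t)_{\lceil k\rceil}|/s(t).$$ Then $(f,v,g)$ satisfies the discrete transport equation, and $\mathcal{I}_q(v,g)=W_1(f(0),f(1))$ for every $q\ge 1$.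
   Context: For a finite graph $\mathcal{G}=(\mathcal{V},\mathcal{E})$ whose edges have been given an orientation, each edge $k$ goes from its tail vertex $\lfloor k\rfloor$ to its head vertex $\lceil k\rceil$. The incidence matrix $\Omega=(\omega_{x,k})$ has $\omega_{x,k}=1$ if $x=\lceil k\rceil$, $\omega_{x,k}=-1$ if $x=\lfloor k\rfloor$, and $\omega_{x,k}=0$ otherwise. $\mathcal{P}(\mathcal{V})$ and $\mathcal{P}(\mathcal{E})$ denote probability vectors on $\mathcal{V}$ and on $\mathcal{E}$. $W_1$ is the Wasserstein-1 distance on $\mathcal{P}(\mathcal{V})$ for the cost $d(x,y)$ equal to the shortest-path distance in the underlying undirected graph (unit edge lengths): $W_1(\mu,\nu)=\min_{\pi}\sum_{x,y}d(x,y)\pi(x,y)$, the minimum taken over couplings $\pi$ of $\mu$ and $\nu$. A path $f:[0,1]\to\mathcal{P}(\mathcal{V})$ is a constant speed $W_1$-geodesic if $W_1(f(s),f(t))=|s-t|\,W_1(f(0),f(1))$ for all $s,t\in[0,1]$. Its metric speed is $|\dot f|_{W_1}(t)=\lim_{h\to0}W_1(f(t+h),f(t))/|h|$. A triple $(f,v,g)$ consists of an absolutely continuous $f:[0,1]\to\mathcal{P}(\mathcal{V})$, a measurable $v:[0,1]\to\mathbb{R}^{\mathcal{E}}$ and a measurable $g:[0,1]\to\mathcal{P}(\mathcal{E})$. It satisfies the discrete transport equation if $\partial_t f(t)_x=\sum_{k}\omega_{x,k}v(t)_kg(t)_k$ for a.e. $t$ and all $x$. For $q\ge1$, $\mathcal{I}_q(v,g)=\big(\int_0^1\sum_{k\in\mathcal{E}}g(t)_k|v(t)_k|^q\,dt\big)^{1/q}$.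 For a tree rooted at $r$ with edges oriented away from $r$, $U(x)$ is the vertex set of the subtree rooted at $x$ (including $x$), and $F(t)_x=\sum_{y\in U(x)}f(t)_y$. *)

From HB Require Import structures.
From mathcomp Require Import all_boot all_order all_algebra.
From mathcomp Require Import all_classical all_reals all_analysis.
Set Implicit Arguments. Unset Strict Implicit. Unset Printing Implicit Defensive.
Import Order.TTheory GRing.Theory Num.Theory.
Import numFieldNormedType.Exports.
Local Open Scope classical_set_scope.
Local Open Scope ring_scope.

Section TreeW1.
Variables (R : realType) (V E : finType) (tl hd : E -> V).

Definition adj : rel V := fun a b =>
  [exists k, ((tl k == a) && (hd k == b)) || ((tl k == b) && (hd k == a))].

Definition nball (x : V) (n : nat) : {set V} :=
  iter n (fun S => S :|: [set b | [exists a in S, adj a b]]%SET) [set x]%SET.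

(* shortest-path distance (unit edge lengths); in a connected graph it is
   always < #|V| so the truncation at #|V| is never active *)
Definition gdist (x y : V) : nat :=
  \big[minn/#|V|]_(n < #|V| | y \in nball x n) n.

Definition is_tree : Prop :=
  (forall x y, connect adj x y) /\ #|E| = #|V|.-1.

Definition oriented_away (r : V) : Prop :=
  forall k, (gdist r (tl k) < gdist r (hd k))%N.

Definition omega (x : V) (k : E) : R := (hd k == x)%:R - (tl k == x)%:R.

Definition dadj : rel V := fun a b => [exists k, (tl k == a) && (hd k == b)].
Definition subtree (x : V) : {set V} := [set y | connect dadj x y]%SET.

Definition tails (f : R -> V -> R) (t : R) (x : V) : R :=
  \sum_(y in subtree x) f t y.

Definition isProb (T : finType) (mu : T -> R) : Prop :=
  (forall x, 0 <= mu x) /\ \sum_x mu x = 1.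

Definition coupling (mu nu : V -> R) (pi : V -> V -> R) : Prop :=
  [/\ forall x y, 0 <= pi x y,
      forall x, \sum_y pi x y = mu x &
      forall y, \sum_x pi x y = nu y].

(* Wasserstein-1 distance (min over couplings, written as the infimum) *)
Definition W1 (mu nu : V -> R) : R :=
  inf [set c | exists pi, coupling mu nu pi /\
               c = \sum_x \sum_y (gdist x y)%:R * pi x y].

Definition metric_speed_is (f : R -> V -> R) (t l : R) : Prop :=
  (fun h => W1 (f (t + h)) (f t) / `|h|) @ within [set h | 0 <= t + h <= 1] (0 : R)^'
    --> l.

Definition C1_on01 (f df : R -> V -> R) : Prop :=
  (forall x t, 0 <= t <= 1 ->
     (fun h => (f (t + h) x - f t x) / h) @ within [set h | 0 <= t + h <= 1] (0 : R)^'
       --> df t x) /\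
  (forall x, {within `[0, 1], continuous (fun t => df t x)}).

Definition const_speed_geodesic (f : R -> V -> R) : Prop :=
  forall s t, 0 <= s <= 1 -> 0 <= t <= 1 ->
    W1 (f s) (f t) = `|s - t| * W1 (f 0) (f 1).

Definition transport_eq (df : R -> V -> R) (v g : R -> E -> R) : Prop :=
  {ae (@lebesgue_measure R), forall t, `[0%R, 1%R]%classic t ->
     forall x, df t x = \sum_k omega x k * v t k * g t k}.

Definition Iq (v g : R -> E -> R) (q : R) : R :=
  (fine (\int[@lebesgue_measure R]_(t in `[0, 1])
           (\sum_k g t k * (`|v t k| `^ q))%:E)) `^ q^-1.

End TreeW1.

(* On a tree, [W1 mu nu] is the l1 distance between the tails of [mu] and [nu].
   Every coupling pays at least this much: mass sent from [x] to [y] changes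
   only the tails at the at most [gdist x y] vertices whose subtree separates
   [x] from [y].  The bound is attained by induction on the number of vertices
   with nonzero tail difference: at a deepest such vertex the difference sits
   on the vertex itself, so it can be pushed one edge towards the root at cost
   equal to its size.
   Hence [W1 (f (t + h)) (f t) / |h|] is a finite sum of absolute difference
   quotients of tails and tends to [s t]; along a constant speed geodesic the
   same quotient is constantly [W1 (f 0) (f 1)].  The tail at the root is the
   total mass, so its derivative vanishes; as the tail at [x] is [f x] plus the
   tails of the children of [x], the fluxes [v g] along the edges, equal to the
   derivatives of the tails of their heads, solve the transport equation, and
   [g] is a probability on the edges with [|v| = W1 (f 0) (f 1)] on its
   support, which gives [Iq v g q = W1 (f 0) (f 1)]. *)

From HB Require Import structures.
From mathcomp Require Import all_boot all_order all_algebra.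
From mathcomp Require Import all_classical all_reals all_analysis.
From mathcomp Require Import ring.
Set Implicit Arguments. Unset Strict Implicit. Unset Printing Implicit Defensive.
Import Order.TTheory GRing.Theory Num.Theory.
Import numFieldNormedType.Exports.
Local Open Scope ring_scope.

Section GraphDistance.
Variables (V E : finType) (tl hd : E -> V).

Local Notation adj := (adj tl hd).
Local Notation nball := (nball tl hd).
Local Notation gdist := (gdist tl hd).

Lemma adjC a b : adj a b = adj b a.
Proof. by apply/existsP/existsP => -[k Hk]; exists k; rewrite orbC. Qed.

Lemma mem_nball0 x y : (y \in nball x 0) = (y == x).
Proof. by rewrite /nball /= inE. Qed.

Lemma nballS x n : nball x n.+1 = nball x n :|: [set b | [exists a in nball x n, adj a b]].
Proof. by []. Qed.

Lemma mem_nballS x y n :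
  (y \in nball x n.+1) = (y \in nball x n) || [exists a in nball x n, adj a y].
Proof. by rewrite nballS !inE. Qed.

Lemma nball_center x n : x \in nball x n.
Proof. by elim: n => [|n IHn]; rewrite ?mem_nball0 ?mem_nballS ?IHn. Qed.

Lemma nball_adj x a b n : a \in nball x n -> adj a b -> b \in nball x n.+1.
Proof.
by move=> Ha Hab; rewrite mem_nballS; apply/orP; right; apply/existsP; exists a; rewrite Ha.
Qed.

Lemma nball_trans x y z n m :
  y \in nball x n -> z \in nball y m -> z \in nball x (m + n).
Proof.
move=> Hy; elim: m z => [|m IHm] z; first by rewrite mem_nball0 => /eqP ->.
rewrite mem_nballS => /orP[/IHm Hz|/existsP[a /andP[/IHm Ha Haz]]].
  by rewrite addSn mem_nballS Hz.
exact: nball_adj Ha Haz.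
Qed.

Lemma nball_sym x y n : y \in nball x n -> x \in nball y n.
Proof.
elim: n y => [|n IHn] y; first by rewrite !mem_nball0 eq_sym.
rewrite mem_nballS => /orP[/IHn Hx|/existsP[a /andP[/IHn Hx Hay]]].
  by rewrite mem_nballS Hx.
have Ha : a \in nball y 1 by apply: nball_adj (nball_center y 0) _; rewrite adjC.
by rewrite -addn1 (nball_trans Ha Hx).
Qed.

Lemma gdistP x y :
  gdist x y = #|V| \/ (gdist x y < #|V|)%N /\ y \in nball x (gdist x y).
Proof.
apply: (big_ind (fun v => v = #|V| \/ (v < #|V|)%N /\ y \in nball x v)) => //.
- by left.
- by move=> a b Ha Hb; rewrite /minn; case: ifP.
- by move=> i Hi; right.
Qed.

Lemma gdist_le_card x y : (gdist x y <= #|V|)%N.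
Proof. by case: (gdistP x y) => [->|[/ltnW]]. Qed.

Lemma gdist_le_nball x y n : y \in nball x n -> (gdist x y <= n)%N.
Proof.
move=> Hy; case: (ltnP n #|V|) => [Hn|/(leq_trans (gdist_le_card x y))//].
rewrite /gdist; have : Ordinal Hn \in index_enum 'I_#|V| by rewrite mem_index_enum.
elim: (index_enum _) => // i s IHs; rewrite inE big_cons => /orP[/eqP <-|/IHs H].
  by rewrite Hy geq_minl.
by case: ifP => _ //; exact: leq_trans (geq_minr _ _) H.
Qed.

Lemma gdistxx x : gdist x x = 0%N.
Proof. by apply/eqP; rewrite -leqn0; apply: gdist_le_nball; rewrite mem_nball0. Qed.

Lemma gdistC x y : gdist x y = gdist y x.
Proof. by apply: eq_bigl => n; apply/idP/idP => /nball_sym. Qed.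

Lemma gdist_triangle x y z : (gdist x z <= gdist x y + gdist y z)%N.
Proof.
case: (gdistP x y) => [->|[_ Hy]]; first exact: leq_trans (gdist_le_card _ _) (leq_addr _ _).
case: (gdistP y z) => [->|[_ Hz]]; first exact: leq_trans (gdist_le_card _ _) (leq_addl _ _).
by rewrite addnC; apply: gdist_le_nball; exact: nball_trans Hy Hz.
Qed.

Lemma gdist_hd_le k y : (gdist (hd k) y <= gdist (tl k) y + 1)%N.
Proof.
rewrite addnC; apply: leq_trans (gdist_triangle _ (tl k) _) _; rewrite leq_add2r.
apply: gdist_le_nball; apply: nball_adj (nball_center _ 0) _.
by apply/existsP; exists k; rewrite !eqxx orbT.
Qed.

End GraphDistance.

Section Tree.
Variables (V E : finType) (tl hd : E -> V) (r : V).
Hypotheses (Htree : is_tree tl hd) (Horient : oriented_away tl hd r).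

Local Notation depth := (gdist tl hd r).
Local Notation U := (subtree tl hd).

Lemma hd_neq_root k : hd k != r.
Proof. by apply/eqP => hk; have := Horient k; rewrite hk gdistxx. Qed.

Lemma nball_root_grows n :
  (n < #|nball tl hd r n|)%N \/ nball tl hd r n.+1 = nball tl hd r n.
Proof.
elim: n => [|n [IHn|IHn]]; first by left; rewrite /nball /= cards1.
- have [E1|N1] := eqVneq (nball tl hd r n.+1) (nball tl hd r n).
    by right; rewrite nballS E1 -nballS.
  left; apply: leq_ltn_trans IHn _; apply: proper_card.
  by rewrite finset.properEneq eq_sym N1 nballS finset.subsetUl.
- by right; rewrite nballS IHn -nballS.
Qed.

Lemma mem_nball_root y : y \in nball tl hd r #|V|.-1.
Proof.
have V_gt0 : (0 < #|V|)%N by apply/card_gt0P; exists r.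
case: (nball_root_grows #|V|.-1) => [Hcard|Hfix].
  suff -> : nball tl hd r #|V|.-1 = [set: V] by rewrite inE.
  by apply/eqP; rewrite finset.eqEcard finset.subsetT cardsT -(prednK V_gt0).
set S := nball tl hd r #|V|.-1 in Hfix *.
have S_closed a b : a \in S -> adj tl hd a b -> b \in S.
  by move=> Ha Hab; rewrite -Hfix; exact: nball_adj Ha Hab.
have path_in x p : x \in S -> path (adj tl hd) x p -> last x p \in S.
  elim: p x => //= a p IHp x Hx /andP[Hxa Hp]; exact: IHp (S_closed _ _ Hx Hxa) Hp.
have [/(_ r y) /connectP[p Hp ->] _] := Htree.
exact: path_in (nball_center tl hd r _) Hp.
Qed.

Lemma depth_lt_card y : (depth y < #|V|)%N.
Proof.
apply: leq_ltn_trans (gdist_le_nball (mem_nball_root y)) _.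
by rewrite prednK //; apply/card_gt0P; exists r.
Qed.

Lemma mem_nball_depth y : y \in nball tl hd r (depth y).
Proof. by case: (gdistP tl hd r y) => [Hy|[]//]; have := depth_lt_card y; rewrite Hy ltnn. Qed.

Lemma depth_ind (P : V -> Prop) :
  (forall y, (forall z, (depth z < depth y)%N -> P z) -> P y) -> forall y, P y.
Proof.
move=> IH y; move: {2}(depth y) (leqnn (depth y)) => n; elim: n y => [|n IHn] y Hy.
  by apply: IH => z /leq_trans/(_ Hy).
by apply: IH => z Hz; apply: IHn; rewrite -ltnS (leq_trans Hz Hy).
Qed.

(* The last step of a shortest path from the root goes away from it. *)
Lemma exists_hd y : y != r -> exists k, hd k = y.
Proof.
move=> yr; have := mem_nball_depth y.
case Ed: (depth y) => [|d]; first by rewrite mem_nball0 (negbTE yr).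
rewrite mem_nballS => /orP[/gdist_le_nball|]; first by rewrite Ed ltnn.
case/existsP=> a /andP[Ha /existsP[k /orP[]/andP[/eqP Hk1 /eqP Hk2]]].
  by exists k.
have := Horient k; rewrite Hk1 Hk2 Ed => /leq_trans/(_ (gdist_le_nball Ha)).
by move/ltnW; rewrite ltnn.
Qed.

Lemma hd_inj : injective hd.
Proof.
suff /imset_injP hd_inj : #|hd @: [set: E]| == #|[set: E]|.
  by move=> k1 k2; apply: hd_inj; rewrite inE.
rewrite eqn_leq leq_imset_card cardsT /=; have [_ ->] := Htree.
rewrite -(cardsC1 r); apply: subset_leq_card; apply/fintype.subsetP => y.
by rewrite !inE => /exists_hd[k <-]; apply: imset_f; rewrite inE.
Qed.

Lemma sum_hd (M : zmodType) (phi : V -> M) :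
  \sum_k phi (hd k) = \sum_x phi x - phi r.
Proof.
rewrite (bigD1 r) //= addrAC subrr add0r.
have hd_image : hd @: [set: E] = [set~ r].
  apply/setP => y; rewrite !inE; apply/imsetP/idP => [[k _ ->]|/exists_hd[k <-]].
    exact: hd_neq_root.
  by exists k; rewrite ?inE.
have -> : \sum_k phi (hd k) = \sum_(k in [set: E]) phi (hd k).
  by apply: eq_bigl => k; rewrite inE.
rewrite -(big_imset phi (fun k1 k2 _ _ => @hd_inj k1 k2)) hd_image.
by apply: eq_bigl => y; rewrite !inE.
Qed.

Lemma subtree_refl x : x \in U x.
Proof. by rewrite inE connect0. Qed.

Lemma subtree_trans x y z : y \in U x -> z \in U y -> z \in U x.
Proof. by rewrite !inE; exact: connect_trans. Qed.

Lemma subtree_hd x k : tl k \in U x -> hd k \in U x.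
Proof.
move=> Hk; apply: subtree_trans Hk _; rewrite inE connect1 //.
by apply/existsP; exists k; rewrite !eqxx.
Qed.

Lemma subtree_root y : y \in U r.
Proof.
elim/depth_ind: y => y IH; have [->|yr] := eqVneq y r; first exact: subtree_refl.
have [k hk] := exists_hd yr; rewrite -hk; apply: subtree_hd; apply: IH.
by rewrite -hk; exact: Horient.
Qed.

Lemma subtree_last x y : y \in U x -> y != x -> exists k, hd k = y /\ tl k \in U x.
Proof.
rewrite inE => /connectP[p Hp ->]; elim/last_ind: p Hp => [|p b _]; first by rewrite eqxx.
rewrite rcons_path last_rcons => /andP[Hp /existsP[k /andP[/eqP H1 /eqP H2]]] _.
by exists k; split => //; rewrite inE H1; apply/connectP; exists p.
Qed.

Lemma depth_subtree x y : y \in U x -> (depth x <= depth y)%N.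
Proof.
rewrite inE => /connectP[p Hp ->]; elim: p x Hp => //= a p IHp x /andP[Hxa /IHp].
by case/existsP: Hxa => k /andP[/eqP <- /eqP <-]; apply/leq_trans/ltnW/Horient.
Qed.

Lemma tl_notin_subtree_hd k : tl k \notin U (hd k).
Proof. by apply/negP => /depth_subtree; rewrite leqNgt Horient. Qed.

Lemma mem_subtree_hd k z : (hd k \in U z) = (tl k \in U z) || (z == hd k).
Proof.
apply/idP/idP => [Hk|/orP[/subtree_hd //|/eqP ->]]; last exact: subtree_refl.
have [->|Hz] := eqVneq z (hd k); first by rewrite orbT.
have [k' [/hd_inj -> ->]] // := subtree_last Hk (ltac:(by rewrite eq_sym)).
Qed.

Lemma subtree_child_uniq k1 k2 y :
  tl k1 = tl k2 -> y \in U (hd k1) -> y \in U (hd k2) -> k1 = k2.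
Proof.
move=> Ht; elim/depth_ind: y => y IH H1 H2.
have at_hd ka kb : tl ka = tl kb -> y = hd ka -> y \in U (hd kb) -> ka = kb.
  move=> Htab Hy Hb; have [Eb|Hne] := eqVneq y (hd kb).
    by apply: hd_inj; rewrite -Hy -Eb.
  have [k' [E1 E2]] := subtree_last Hb Hne.
  have Ek : k' = ka by apply: hd_inj; rewrite E1 Hy.
  by move: (tl_notin_subtree_hd kb); rewrite -Htab -Ek E2.
have [E1|N1] := eqVneq y (hd k1); first exact: at_hd Ht E1 H2.
have [E2|N2] := eqVneq y (hd k2); first exact: esym (at_hd _ _ (esym Ht) E2 H1).
have [k' [E1 F1]] := subtree_last H1 N1.
have [k'' [E2 F2]] := subtree_last H2 N2.
have Ek : k'' = k' by apply: hd_inj; rewrite E1 E2.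
by rewrite Ek in F2; apply: IH F1 F2; rewrite -E1; exact: Horient.
Qed.

Lemma subtree_child_exists x y :
  y \in U x -> y != x -> exists k, tl k = x /\ y \in U (hd k).
Proof.
elim/depth_ind: y => y IH Hy Hne; have [k' [E1 F1]] := subtree_last Hy Hne.
have [E2|N2] := eqVneq (tl k') x; first by exists k'; rewrite E2 -E1 subtree_refl.
have [k [Hk1 Hk2]] := IH (tl k') (ltac:(rewrite -E1; exact: Horient)) F1 N2.
by exists k; split => //; rewrite -E1; apply: subtree_hd.
Qed.

Lemma card_child_edges x y :
  #|[set k | (tl k == x) && (y \in U (hd k))]| = ((y \in U x) && (y != x)) :> nat.
Proof.
case: (boolP ((y \in U x) && (y != x))) => [/andP[Hy Hne]|Hy].
  have [k [Hk1 Hk2]] := subtree_child_exists Hy Hne.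
  apply/eqP/cards1P; exists k; apply/setP => k'; rewrite finset.in_set finset.in_set1.
  apply/idP/eqP => [/andP[/eqP Hk' Hyk']|->]; last by rewrite Hk1 eqxx.
  by apply: subtree_child_uniq Hyk' Hk2; rewrite Hk' Hk1.
apply/eqP; rewrite /= cards_eq0; apply/eqP/setP => k; rewrite finset.in_set finset.in_set0.
apply/negP => /andP[/eqP Hk Hyk]; move/negP: Hy; apply; apply/andP; split.
  by apply: subtree_trans Hyk; apply: subtree_hd; rewrite Hk subtree_refl.
by apply: contraNneq (tl_notin_subtree_hd k) => yx; rewrite Hk -yx.
Qed.

Lemma sum_subtree_rec (M : zmodType) (m : V -> M) x :
  \sum_(y in U x) m y = m x + \sum_(k | tl k == x) \sum_(y in U (hd k)) m y.
Proof.
rewrite (bigD1 x) ?subtree_refl //= (exchange_big_dep predT) //=; congr (_ + _).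
rewrite [RHS]big_mkcond [LHS]big_mkcond; apply: eq_bigr => y _ /=.
have -> : \sum_(k | (tl k == x) && (y \in U (hd k))) m y =
    \sum_(k in [set k | (tl k == x) && (y \in U (hd k))]) m y.
  by apply: eq_bigl => k; rewrite finset.in_set.
by rewrite sumr_const card_child_edges; case: ifP.
Qed.

End Tree.

Section TreeW1.
Variable R : realType.
Variables (V E : finType) (tl hd : E -> V) (r : V).
Hypotheses (Htree : is_tree tl hd) (Horient : oriented_away tl hd r).

Local Notation U := (subtree tl hd).
Local Notation gdist := (gdist tl hd).

Definition cost (pi : V -> V -> R) : R := \sum_x \sum_y (gdist x y)%:R * pi x y.

Definition excess (mu nu : V -> R) (z : V) : R := \sum_(y in U z) (mu y - nu y).

Lemma sumr_delta (z : V) (g : V -> R) : \sum_x (x == z)%:R * g x = g z.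
Proof. by rewrite (bigD1 z) //= eqxx mul1r big1 ?addr0 // => x /negbTE ->; rewrite mul0r. Qed.

Lemma subtree_indicatorB k z : (hd k \in U z)%:R - (tl k \in U z)%:R = (z == hd k)%:R :> R.
Proof.
rewrite (mem_subtree_hd Htree Horient); have [->|_] := eqVneq z (hd k).
  by rewrite (negbTE (tl_notin_subtree_hd Horient k)) subr0.
by rewrite orbF subrr.
Qed.

Lemma subtree_symdiff_adj a b :
  adj tl hd a b -> \sum_z `|(a \in U z)%:R - (b \in U z)%:R| = 1 :> R.
Proof.
case/existsP => k /orP[]/andP[/eqP <- /eqP <-].
  under eq_bigr do rewrite distrC subtree_indicatorB ger0_norm //.
  by rewrite -[RHS](sumr_delta (hd k) (fun=> 1)); apply: eq_bigr => z _; rewrite mulr1.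
under eq_bigr do rewrite subtree_indicatorB ger0_norm //.
by rewrite -[RHS](sumr_delta (hd k) (fun=> 1)); apply: eq_bigr => z _; rewrite mulr1.
Qed.

Lemma subtree_symdiff_le x y :
  \sum_z `|(x \in U z)%:R - (y \in U z)%:R| <= (gdist x y)%:R :> R.
Proof.
case: (gdistP tl hd x y) => [->|[_]].
  rewrite -sum1_card natr_sum; apply: ler_sum => z _.
  by do 2 case: (_ \in _); rewrite ?subrr ?normr0 ?subr0 ?sub0r ?normrN ?normr1.
elim: (gdist x y) {1 3}y => [|n IHn] z.
  by rewrite mem_nball0 => /eqP ->; rewrite big1 // => w _; rewrite subrr normr0.
rewrite mem_nballS => /orP[/IHn Hz|/existsP[a /andP[/IHn Ha Haz]]].
  by apply: le_trans Hz _; rewrite ler_nat.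
apply: le_trans (ler_sum _ (fun w _ => ler_distD ((a \in U w)%:R) _ _)) _.
by rewrite big_split /= (subtree_symdiff_adj Haz) -natr1 lerD2r.
Qed.

Lemma excess_coupling mu nu pi z : coupling mu nu pi ->
  excess mu nu z = \sum_x \sum_y pi x y * ((x \in U z)%:R - (y \in U z)%:R).
Proof.
case=> _ Hmu Hnu.
have -> : excess mu nu z = \sum_x (x \in U z)%:R * mu x - \sum_y (y \in U z)%:R * nu y.
  rewrite /excess -sumrB big_mkcond; apply: eq_bigr => y _ /=.
  by case: (y \in U z); rewrite ?mul1r ?mul0r ?subrr.
under [X in X - _]eq_bigr do rewrite -Hmu mulr_sumr.
under [X in _ - X]eq_bigr do rewrite -Hnu mulr_sumr.
rewrite [X in _ - X]exchange_big -sumrB; apply: eq_bigr => x _.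
by rewrite -sumrB; apply: eq_bigr => y _; rewrite mulrBr ![pi x y * _]mulrC.
Qed.

Lemma sum_excess_le_cost mu nu pi : coupling mu nu pi ->
  \sum_z `|excess mu nu z| <= cost pi.
Proof.
move=> Hpi; have [pi_ge0 _ _] := Hpi.
apply: le_trans (_ : \sum_z \sum_x \sum_y pi x y * `|(x \in U z)%:R - (y \in U z)%:R| <= _).
  apply: ler_sum => z _; rewrite (excess_coupling z Hpi).
  apply: le_trans (ler_norm_sum _ _ _) (ler_sum _ _) => x _.
  apply: le_trans (ler_norm_sum _ _ _) (ler_sum _ _) => y _.
  by rewrite normrM ger0_norm.
rewrite exchange_big; apply: ler_sum => x _; rewrite exchange_big; apply: ler_sum => y _.
by rewrite -mulr_sumr mulrC ler_wpM2r // subtree_symdiff_le.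
Qed.

Lemma excess_swap mu nu z : excess nu mu z = - excess mu nu z.
Proof. by rewrite /excess -sumrN; apply: eq_bigr => y _; rewrite opprB. Qed.

Lemma excess_root mu nu : \sum_x mu x = \sum_x nu x -> excess mu nu r = 0.
Proof.
move=> Hmass; rewrite /excess (eq_bigl predT) => [|y]; last exact: subtree_root.
by rewrite sumrB Hmass subrr.
Qed.

Lemma excess_rec mu nu x :
  excess mu nu x = mu x - nu x + \sum_(k | tl k == x) excess mu nu (hd k).
Proof. exact: sum_subtree_rec. Qed.

Lemma excess_eq0 mu nu : (forall z, excess mu nu z = 0) -> mu = nu.
Proof.
move=> H; apply/funext => x; apply/eqP; rewrite -subr_eq0.
by rewrite -(H x) excess_rec big1 ?addr0 // => k _; rewrite H.
Qed.

Definition transfer (mu : V -> R) (a b : V) (c : R) : V -> R :=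
  fun x => mu x + c * ((x == b)%:R - (x == a)%:R).

Lemma sum_transfer mu a b c : \sum_x transfer mu a b c x = \sum_x mu x.
Proof.
rewrite big_split /= -mulr_sumr sumrB.
by rewrite -!(eq_bigr _ (fun x _ => mulr1 ((x == _)%:R))) !sumr_delta subrr mulr0 addr0.
Qed.

Lemma transferK mu a b c : transfer (transfer mu a b c) b a c = mu.
Proof. by apply/funext => x; rewrite /transfer; ring. Qed.

Lemma transfer_src mu a b c : a != b -> transfer mu a b c a = mu a - c.
Proof. by move=> /negbTE ab; rewrite /transfer ab eqxx sub0r mulrN1. Qed.

Lemma transfer_dst mu a b c : a != b -> transfer mu a b c b = mu b + c.
Proof. by rewrite eq_sym => /negbTE ba; rewrite /transfer ba eqxx subr0 mulr1. Qed.

Lemma transfer_other mu a b c x : x != a -> x != b -> transfer mu a b c x = mu x.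
Proof. by move=> /negbTE xa /negbTE xb; rewrite /transfer xa xb subrr mulr0 addr0. Qed.

Lemma sum_subtree_delta w z : \sum_(y in U w) (y == z)%:R = (z \in U w)%:R :> R.
Proof.
rewrite big_mkcond -(sumr_delta z (fun y => (y \in U w)%:R)).
by apply: eq_bigr => y _; case: (y \in U w); case: eqP; rewrite ?mulr1 ?mulr0.
Qed.

Lemma excess_transfer_edge mu nu k c w :
  excess (transfer mu (hd k) (tl k) c) nu w = excess mu nu w - c * (w == hd k)%:R.
Proof.
rewrite /excess /transfer.
under eq_bigr do rewrite addrAC.
rewrite big_split /= -mulr_sumr; congr (_ + _).
by rewrite sumrB !sum_subtree_delta -subtree_indicatorB -mulrN opprB.
Qed.

Lemma coupling_diag (mu : V -> R) :
  (forall x, 0 <= mu x) -> coupling mu mu (fun x y => (y == x)%:R * mu x).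
Proof.
move=> mu_ge0; split=> [x y|x|y]; first exact: mulr_ge0.
  exact: sumr_delta x (fun=> mu x).
by under eq_bigr do rewrite eq_sym; rewrite sumr_delta.
Qed.

Lemma cost_diag (mu : V -> R) : cost (fun x y => (y == x)%:R * mu x) = 0.
Proof.
rewrite /cost big1 // => x _; rewrite big1 // => y _.
by case: eqP => [->|]; rewrite ?gdistxx ?mul0r ?mulr0.
Qed.

Lemma coupling_transpose (mu nu : V -> R) (pi : V -> V -> R) :
  coupling mu nu pi -> coupling nu mu (fun x y => pi y x).
Proof. by case. Qed.

Lemma cost_transpose pi : cost (fun x y => pi y x) = cost pi.
Proof.
rewrite /cost exchange_big; apply: eq_bigr => x _; apply: eq_bigr => y _.
by rewrite gdistC.
Qed.

(* A fraction [c / mu (tl k)] of the plan leaving [tl k] is redirected to leave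
   from [hd k]; each redirected unit travels at most one step more. *)
Lemma coupling_transfer_edge mu nu pi k c :
  coupling mu nu pi -> tl k != hd k -> 0 < c -> c <= mu (tl k) ->
  exists2 pi', coupling (transfer mu (tl k) (hd k) c) nu pi' & cost pi' <= cost pi + c.
Proof.
case=> pi_ge0 Hmu Hnu tk c_gt0 c_le; set p := tl k; set z := hd k.
have mup_gt0 : 0 < mu p by apply: lt_le_trans c_le.
set l := c / mu p.
have lmu : l * mu p = c by rewrite /l divfK // gt_eqF.
have l_ge0 : 0 <= l by rewrite divr_ge0 // ltW.
have l_le1 : l <= 1 by rewrite ler_pdivrMr // mul1r.
pose d x : R := (x == z)%:R - (x == p)%:R.
have sum_d g : \sum_x d x * g x = g z - g p.
  by rewrite /d; under eq_bigr do rewrite mulrBl; rewrite sumrB !sumr_delta.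
exists (fun x y => pi x y + d x * (l * pi p y)); first split.
- move=> x y; rewrite /d; have [->|xz] := eqVneq x z.
    by rewrite eq_sym (negbTE tk) /= subr0 mul1r; apply: addr_ge0 => //; apply: mulr_ge0.
  have [->|_] := eqVneq x p; last by rewrite subrr mul0r addr0.
  by rewrite sub0r mulN1r -{1}(mul1r (pi p y)) -mulrBl mulr_ge0 // subr_ge0.
- move=> x; rewrite big_split /= Hmu -!mulr_sumr Hmu lmu /transfer.
  by rewrite /d mulrC.
- by move=> y; rewrite big_split /= Hnu (sum_d (fun=> l * pi p y)) subrr addr0.
have -> : cost (fun x y => pi x y + d x * (l * pi p y)) =
    cost pi + \sum_y ((gdist z y)%:R - (gdist p y)%:R) * (l * pi p y).
  rewrite /cost; under eq_bigr do (under eq_bigr do rewrite mulrDr; rewrite big_split /=).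
  rewrite big_split /=; congr (_ + _); rewrite exchange_big; apply: eq_bigr => y _.
  rewrite mulrBl -(sum_d (fun x => (gdist x y)%:R * (l * pi p y))).
  by apply: eq_bigr => x _; rewrite mulrCA.
rewrite lerD2l -lmu -Hmu mulr_sumr; apply: ler_sum => y _.
rewrite -[X in _ <= X]mul1r ler_wpM2r ?(mulr_ge0 l_ge0) //.
by rewrite lerBlDl natr1 ler_nat -addn1 gdist_hd_le.
Qed.

Lemma tl_neq_hd k : tl k != hd k.
Proof. by apply/eqP => tk; have := Horient k; rewrite tk ltnn. Qed.

Definition equal_mass (mu nu : V -> R) : Prop :=
  [/\ forall x, 0 <= mu x, forall x, 0 <= nu x & \sum_x mu x = \sum_x nu x].

Definition excess_attained (mu nu : V -> R) : Prop :=
  exists2 pi, coupling mu nu pi & cost pi <= \sum_z `|excess mu nu z|.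

Definition excess_support (mu nu : V -> R) : {set V} := [set z | excess mu nu z != 0].

Lemma excess_support_swap mu nu : excess_support nu mu = excess_support mu nu.
Proof. by apply/setP => z; rewrite !inE excess_swap oppr_eq0. Qed.

Lemma excess_attained_swap mu nu : excess_attained nu mu -> excess_attained mu nu.
Proof.
case=> pi Hpi Hcost; exists (fun x y => pi y x); first exact: coupling_transpose.
by rewrite cost_transpose; move: Hcost; under eq_bigr do rewrite excess_swap normrN.
Qed.

Lemma excess_attained_eq0 mu nu :
  equal_mass mu nu -> (forall z, excess mu nu z = 0) -> excess_attained mu nu.
Proof.
case=> mu_ge0 _ _ /excess_eq0 <-.
exists (fun x y => (y == x)%:R * mu x); first exact: coupling_diag.
by rewrite cost_diag sumr_ge0.
Qed.

Lemma sum_excess_transfer_edge mu nu k (c := excess mu nu (hd k)) : 0 <= c ->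
  \sum_w `|excess (transfer mu (hd k) (tl k) c) nu w| + c = \sum_w `|excess mu nu w|.
Proof.
move=> c_ge0; rewrite (bigD1 (hd k)) // [RHS](bigD1 (hd k)) //=.
rewrite excess_transfer_edge eqxx mulr1 subrr normr0 add0r addrC ger0_norm //.
by congr (_ + _); apply: eq_bigr => w /negbTE wk; rewrite excess_transfer_edge wk mulr0 subr0.
Qed.

Lemma card_support_transfer_edge mu nu k (c := excess mu nu (hd k)) : c != 0 ->
  (#|excess_support (transfer mu (hd k) (tl k) c) nu| < #|excess_support mu nu|)%N.
Proof.
move=> c_neq0; apply: proper_card; rewrite fintype.properE; apply/andP; split.
  apply/fintype.subsetP => w; rewrite !inE excess_transfer_edge.
  by have [->|_] := eqVneq w (hd k); rewrite /= ?mulr1 ?subrr ?eqxx ?mulr0 ?subr0.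
apply/fintype.subsetPn; exists (hd k); first by rewrite inE.
by rewrite inE excess_transfer_edge eqxx mulr1 subrr eqxx.
Qed.

(* The excess at [hd k] sits on [hd k] itself once its children carry no excess;
   sending it up the edge [k] empties this subtree without creating new excess,
   and moving it back costs at most its amount. *)
Lemma excess_attained_deepest n mu nu k :
  (forall mu' nu', equal_mass mu' nu' -> (#|excess_support mu' nu'| <= n)%N ->
     excess_attained mu' nu') ->
  equal_mass mu nu -> (#|excess_support mu nu| <= n.+1)%N ->
  (forall k', tl k' = hd k -> excess mu nu (hd k') = 0) -> 0 < excess mu nu (hd k) ->
  excess_attained mu nu.
Proof.
move=> IH [mu_ge0 nu_ge0 Hmass] Hcard Hchild c_gt0; set c := excess mu nu (hd k) in c_gt0.
have Hc : c = mu (hd k) - nu (hd k).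
  by rewrite /c excess_rec big1 ?addr0 // => k' /eqP; exact: Hchild.
set mu' := transfer mu (hd k) (tl k) c.
have tk := tl_neq_hd k; have kt : hd k != tl k by rewrite eq_sym.
have mu'_ge0 x : 0 <= mu' x.
  have [->|xh] := eqVneq x (hd k).
    by rewrite /mu' transfer_src // Hc opprB addrCA subrr addr0.
  have [->|xt] := eqVneq x (tl k); first by rewrite /mu' transfer_dst // addr_ge0 // ltW.
  by rewrite /mu' transfer_other.
have [pi' Hpi' Hcost'] : excess_attained mu' nu.
  apply: IH; first by split; rewrite // sum_transfer.
  by rewrite -ltnS; apply: leq_trans Hcard; apply: card_support_transfer_edge; rewrite gt_eqF.
have c_le : c <= mu' (tl k) by rewrite /mu' transfer_dst // lerDr.
have [pi Hpi Hcost] := coupling_transfer_edge Hpi' tk c_gt0 c_le.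
rewrite /mu' transferK in Hpi; exists pi => //.
rewrite -(@sum_excess_transfer_edge mu nu k) ?(ltW c_gt0) //.
by apply: le_trans Hcost _; rewrite lerD2r.
Qed.

Lemma excess_attained_card n mu nu :
  equal_mass mu nu -> (#|excess_support mu nu| <= n)%N -> excess_attained mu nu.
Proof.
elim: n mu nu => [|n IHn] mu nu Hmass Hcard.
  apply: excess_attained_eq0 => // z; apply/eqP/negPn/negP => Hz.
  by move: Hcard; rewrite leqn0 cards_eq0 => /eqP/setP/(_ z); rewrite !inE Hz.
have [z0 Hz0|Hnone] := pickP (fun z => excess mu nu z != 0); last first.
  by apply: excess_attained_eq0 => // z; apply/eqP/negbFE/Hnone.
have [z Hz Hmax] := @arg_maxnP _ z0 (fun z => excess mu nu z != 0) (gdist r) Hz0.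
have zr : z != r by apply: contraNneq Hz => ->; rewrite excess_root //; case: Hmass.
have [k Hk] := exists_hd Htree Horient zr; rewrite -{}Hk in Hz Hmax.
have Hchild k' : tl k' = hd k -> excess mu nu (hd k') = 0.
  move=> tk'; apply/eqP; apply: contraTT (Horient k') => /Hmax.
  by rewrite tk' -leqNgt.
case: (ltrgtP 0 (excess mu nu (hd k))) => [Hpos|Hneg|Hzero].
- exact: excess_attained_deepest IHn Hmass Hcard Hchild Hpos.
- apply: excess_attained_swap; apply: (excess_attained_deepest IHn).
  + by case: Hmass.
  + by rewrite excess_support_swap.
  + by move=> k' /Hchild Hk'; rewrite excess_swap Hk' oppr0.
  + by rewrite excess_swap oppr_gt0.
- by rewrite -Hzero eqxx in Hz.
Qed.

Lemma W1_tree (mu nu : V -> R) :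
  isProb mu -> isProb nu -> W1 tl hd mu nu = \sum_z `|excess mu nu z|.
Proof.
case=> mu_ge0 mu_mass [nu_ge0 nu_mass].
have [pi Hpi Hcost] : excess_attained mu nu.
  apply: (@excess_attained_card #|V|); last exact: max_card.
  by split; rewrite // mu_mass nu_mass.
apply/eqP; rewrite eq_le; apply/andP; split.
  apply: le_trans Hcost; apply: ge_inf; last by exists pi.
  by exists (\sum_z `|excess mu nu z|) => _ [pi' [Hpi' ->]]; exact: sum_excess_le_cost.
apply: lb_le_inf; first by exists (cost pi); exists pi.
by move=> _ [pi' [Hpi' ->]]; exact: sum_excess_le_cost.
Qed.

Lemma sum_omega (G : V -> R) x : G r = 0 ->
  \sum_k omega R tl hd x k * G (hd k) = G x - \sum_(k | tl k == x) G (hd k).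
Proof.
move=> Gr; rewrite /omega; under eq_bigr do rewrite mulrBl.
rewrite sumrB (sum_hd Htree Horient (fun y => (y == x)%:R * G y)) Gr mulr0 subr0 sumr_delta.
congr (_ - _); rewrite [RHS]big_mkcond; apply: eq_bigr => k _ /=.
by case: eqP; rewrite ?mul1r ?mul0r.
Qed.

End TreeW1.

Local Open Scope classical_set_scope.

Section Limits.
Variable R : realType.

Lemma cvg_sum {T : Type} (F : set_system T) {FF : Filter F} (I : Type) (s : seq I)
    (P : pred I) (g : I -> T -> R) (l : I -> R) :
  (forall i, P i -> g i @ F --> l i) ->
  (fun x => \sum_(i <- s | P i) g i x) @ F --> \sum_(i <- s | P i) l i.
Proof.
move=> gl; elim: s => [|i s IHs].
  by rewrite big_nil; under eq_fun do rewrite big_nil; exact: cvg_cst.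
rewrite big_cons; under eq_fun do rewrite big_cons.
by case: (boolP (P i)) => // Pi; exact: cvgD (gl i Pi) IHs.
Qed.

Definition dnbhs01 (t : R) : set_system R := within [set h | 0 <= t + h <= 1] 0^'.

Global Instance dnbhs01_filter t : Filter (dnbhs01 t).
Proof. exact: within_filter. Qed.

Lemma near_dnbhs01 t : \forall h \near dnbhs01 t, h != 0 /\ 0 <= t + h <= 1.
Proof. by rewrite /dnbhs01 near_withinE; apply: filterS (nbhs_dnbhs_neq 0) => h. Qed.

Lemma at_right_dnbhs01 t : 0 <= t -> t < 1 -> 0^'+ --> dnbhs01 t.
Proof.
move=> t_ge0 t_lt1 P; rewrite !nbhs_filterE /dnbhs01 /at_right /dnbhs /within /= => HP0.
have HP : \forall h \near nbhs (0 : R), h != 0 -> 0 <= t + h <= 1 -> P h := HP0.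
have small : \forall h \near nbhs (0 : R), h < 1 - t by apply: lt_nbhsl; rewrite subr_gt0.
suff : \forall h \near nbhs (0 : R), 0 < h -> P h by [].
apply: filterS2 HP small => h HP Hh h_gt0; apply: HP; first by rewrite gt_eqF.
by rewrite (addr_ge0 t_ge0 (ltW h_gt0)) /= -lerBrDl ltW.
Qed.

Lemma at_left_dnbhs01 t : 0 < t -> t <= 1 -> 0^'- --> dnbhs01 t.
Proof.
move=> t_gt0 t_le1 P; rewrite !nbhs_filterE /dnbhs01 /at_left /dnbhs /within /= => HP0.
have HP : \forall h \near nbhs (0 : R), h != 0 -> 0 <= t + h <= 1 -> P h := HP0.
have small : \forall h \near nbhs (0 : R), - t < h by apply: lt_nbhsr; rewrite oppr_lt0.
suff : \forall h \near nbhs (0 : R), h < 0 -> P h by [].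
apply: filterS2 HP small => h HP Hh h_lt0; apply: HP; first by rewrite lt_eqF.
by rewrite -lerBlDl sub0r ltW //= (le_trans _ t_le1) // gerDl ltW.
Qed.

Lemma cvg_dnbhs01_unique t (g : R -> R) (a b : R) : 0 <= t <= 1 ->
  g @ dnbhs01 t --> a -> g @ dnbhs01 t --> b -> a = b.
Proof.
case/andP => t_ge0 t_le1 ga gb; have [t_lt1|t_ge1] := ltP t 1.
  have side := at_right_dnbhs01 t_ge0 t_lt1.
  exact: cvg_unique (cvg_trans (cvg_app g side) ga) (cvg_trans (cvg_app g side) gb).
have side : 0^'- --> dnbhs01 t by apply: at_left_dnbhs01 => //; exact: lt_le_trans ltr01 t_ge1.
exact: cvg_unique (cvg_trans (cvg_app g side) ga) (cvg_trans (cvg_app g side) gb).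
Qed.

Lemma measurable_fun_sgr d (T : measurableType d) (D : set T) (g : T -> R) :
  measurable D -> measurable_fun D g -> measurable_fun D (fun x => Num.sg (g x)).
Proof.
move=> mD mg; have sgE x : Num.sg (g x) = (if 0 < g x then 1 else 0) - (if g x < 0 then 1 else 0).
  by case: (ltrgtP 0 (g x)) => [/gtr0_sg|/ltr0_sg|<-]; rewrite ?sgr0 ?subr0 ?sub0r.
under eq_fun do rewrite sgE.
apply: measurable_realfun.measurable_funB.
  apply: measurable_fun_if => //.
  exact: measurable_realfun.measurable_fun_ltr (measurable_cst _) mg.
apply: measurable_fun_if => //.
exact: measurable_realfun.measurable_fun_ltr mg (measurable_cst _).
Qed.

End Limits.

Section Flow.
Variable R : realType.
Variables (V E : finType) (tl hd : E -> V) (r : V) (f df : R -> V -> R).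
Hypotheses (Htree : is_tree tl hd) (Horient : oriented_away tl hd r).
Hypotheses (f_prob : forall t, 0 <= t <= 1 -> isProb (f t)) (f_C1 : C1_on01 f df).

Local Notation F := (tails tl hd).

Definition speed (t : R) : R := \sum_x `|F df t x|.

Lemma tails_root (g : R -> V -> R) t : F g t r = \sum_y g t y.
Proof. by apply: eq_bigl => y; rewrite (subtree_root Htree Horient). Qed.

Lemma cvg_tails_quotient t x : 0 <= t <= 1 ->
  (fun h => (F f (t + h) x - F f t x) / h) @ dnbhs01 t --> F df t x.
Proof.
move=> t01; have [f_deriv _] := f_C1.
under eq_fun do rewrite /tails -sumrB mulr_suml.
by apply: cvg_sum => y _; exact: f_deriv.
Qed.

Lemma W1_flow s t : 0 <= s <= 1 -> 0 <= t <= 1 ->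
  W1 tl hd (f s) (f t) = \sum_x `|F f s x - F f t x|.
Proof.
move=> s01 t01; rewrite (W1_tree Htree Horient (f_prob s01) (f_prob t01)).
by apply: eq_bigr => x _; rewrite /excess /tails sumrB.
Qed.

Lemma metric_speed_tails t : 0 <= t <= 1 -> metric_speed_is tl hd f t (speed t).
Proof.
move=> t01; have quotient_cvg : (fun h => \sum_x `|(F f (t + h) x - F f t x) / h|)
    @ dnbhs01 t --> speed t.
  by apply: cvg_sum => x _; apply: cvg_norm; exact: cvg_tails_quotient.
apply: cvg_trans quotient_cvg; apply: near_eq_cvg.
apply: filterS (near_dnbhs01 t) => h [h_neq0 th01] /=.
rewrite (W1_flow th01 t01) mulr_suml; apply: eq_bigr => x _.
by rewrite normrM normfV.
Qed.

(* The tail at the root is the total mass, which is constant. *)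
Lemma tails_df_root t : 0 <= t <= 1 -> F df t r = 0.
Proof.
move=> t01; apply: (cvg_dnbhs01_unique t01 (cvg_tails_quotient (x := r) t01)).
apply: (cvg_trans (G := (fun=> 0 : R) @ dnbhs01 t)); last exact: cvg_cst.
apply: near_eq_cvg.
apply: filterS (near_dnbhs01 t) => h [_ th01] /=.
rewrite !tails_root; have [_ ->] := f_prob th01; have [_ ->] := f_prob t01.
by rewrite subrr mul0r.
Qed.

Lemma measurable_tails_df x :
  measurable_fun (`[0%R, 1%R] : set R) (fun t => F df t x).
Proof.
have [_ df_cont] := f_C1.
have -> : (fun t => F df t x) =
    (fun t => \sum_(y <- index_enum V) if y \in subtree tl hd x then df t y else 0).
  by apply/funext => t; rewrite /tails big_mkcond.
apply: measurable_sum => y; case: (y \in _); last exact: measurable_cst.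
apply: measurable_realfun.subspace_continuous_measurable_fun => //.
exact: df_cont.
Qed.

Definition velocity (t : R) (k : E) : R := Num.sg (F df t (hd k)) * speed t.
Definition edge_weight (t : R) (k : E) : R := `|F df t (hd k)| / speed t.

Section Geodesic.
Hypotheses (f_geo : const_speed_geodesic tl hd f) (f_ends : f 0 <> f 1).

Local Notation W := (W1 tl hd (f 0) (f 1)).

Lemma W1_ends_gt0 : 0 < W.
Proof.
have f0 := f_prob (t := 0) (ltac:(by rewrite lexx ler01)).
have f1 := f_prob (t := 1) (ltac:(by rewrite lexx ler01)).
rewrite (W1_tree Htree Horient f0 f1) lt_def sumr_ge0 ?andbT //.
apply: contra_notN f_ends => /eqP/psumr_eq0P excess0; apply: (excess_eq0 Htree Horient) => z.
by apply/eqP/normr0P; apply: excess0.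
Qed.

Lemma speed_geodesic t : 0 <= t <= 1 -> speed t = W.
Proof.
move=> t01; apply: (cvg_dnbhs01_unique t01 (metric_speed_tails t01)).
apply: (cvg_trans (G := (fun=> W) @ dnbhs01 t)); last exact: cvg_cst.
apply: near_eq_cvg; apply: filterS (near_dnbhs01 t) => h [h_neq0 th01] /=.
by rewrite (f_geo th01 t01) addrAC subrr add0r mulrAC divff ?mul1r // normr_eq0.
Qed.

Lemma speed_neq0 t : 0 <= t <= 1 -> speed t != 0.
Proof. by move=> t01; rewrite speed_geodesic // gt_eqF // W1_ends_gt0. Qed.

Lemma isProb_edge_weight t : 0 <= t <= 1 -> isProb (edge_weight t).
Proof.
move=> t01; split=> [k|]; first by rewrite divr_ge0 // speed_geodesic // ltW // W1_ends_gt0.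
rewrite -mulr_suml (sum_hd Htree Horient (fun y => `|F df t y|)).
by rewrite tails_df_root // normr0 subr0 divff // speed_neq0.
Qed.

Lemma velocity_edge_weight t k : 0 <= t <= 1 -> velocity t k * edge_weight t k = F df t (hd k).
Proof.
by move=> t01; rewrite /velocity /edge_weight mulrACA divff ?speed_neq0 // mulr1 -numEsg.
Qed.

(* Each edge carries the flux of the tail of its head; the divergence at [x] is
   the tail at [x] minus the tails of its children, i.e. the density at [x]. *)
Lemma transport_eq_geodesic : transport_eq tl hd df velocity edge_weight.
Proof.
apply: aeW => t; rewrite /= in_itv /= => t01 x.
under eq_bigr do rewrite -mulrA velocity_edge_weight //.
rewrite (sum_omega Htree Horient) ?tails_df_root // {1}/tails.
by rewrite (sum_subtree_rec Htree Horient) addrK.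
Qed.

Lemma measurable_velocity k :
  measurable_fun (`[0%R, 1%R] : set R) (fun t => velocity t k).
Proof.
apply: (eq_measurable_fun (fun t => Num.sg (F df t (hd k)) * W)).
  by move=> t; rewrite inE /= in_itv /= => t01; rewrite /velocity speed_geodesic.
apply: measurable_realfun.measurable_funM; last exact: measurable_cst.
exact: measurable_fun_sgr (measurable_tails_df _).
Qed.

Lemma measurable_edge_weight k :
  measurable_fun (`[0%R, 1%R] : set R) (fun t => edge_weight t k).
Proof.
apply: (eq_measurable_fun (fun t => `|F df t (hd k)| * W^-1)).
  by move=> t; rewrite inE /= in_itv /= => t01; rewrite /edge_weight speed_geodesic.
apply: measurable_realfun.measurable_funM; last exact: measurable_cst.
apply: measurableT_comp; [exact: measurable_realfun.normr_measurable|exact: measurable_tails_df].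
Qed.

(* Edges with nonzero weight move at speed exactly [W]. *)
Lemma sum_edge_weight_velocity t q : 0 <= t <= 1 ->
  \sum_k edge_weight t k * `|velocity t k| `^ q = W `^ q.
Proof.
move=> t01; have [_ weight_sum] := isProb_edge_weight t01.
rewrite -[RHS]mul1r -[X in X * _]weight_sum mulr_suml; apply: eq_bigr => k _.
have [Fk0|Fk_neq0] := eqVneq (F df t (hd k)) 0.
  by rewrite /edge_weight Fk0 normr0 !mul0r.
rewrite /velocity speed_geodesic // normrM normr_sg Fk_neq0 mul1r.
by rewrite ger0_norm // (ltW W1_ends_gt0).
Qed.

Lemma Iq_geodesic q : 1 <= q -> Iq velocity edge_weight q = W.
Proof.
move=> q_ge1; have q_neq0 : q != 0 by rewrite gt_eqF // (lt_le_trans ltr01).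
rewrite /Iq (eq_integral (fun=> (W `^ q)%:E)); last first.
  by move=> t; rewrite inE /= in_itv /= => t01; rewrite sum_edge_weight_velocity.
rewrite integral_cst /=; last exact: measurable_itv.
have unit_length : lebesgue_measure (`[0%R, 1%R] : set R) = 1%E.
  by rewrite lebesgue_measure_itv /= lte_fin ltr01 /= -EFinD subr0.
rewrite unit_length mule1 /=.
by rewrite -powRrM mulfV // powRr1 // ltW // W1_ends_gt0.
Qed.

End Geodesic.
End Flow.

Unset Implicit Arguments.

Theorem mainTheorem2 (R : realType) (V E : finType) (tl hd : E -> V) (r : V)
  (f df : R -> V -> R) :
  is_tree tl hd -> oriented_away tl hd r ->
  (forall t, 0 <= t <= 1 -> isProb (f t)) ->
  C1_on01 f df ->
  let s := fun t : R => \sum_x `|tails tl hd df t x| in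
  (forall t, 0 <= t <= 1 -> metric_speed_is tl hd f t (s t)) /\
  (const_speed_geodesic tl hd f -> f 0 <> f 1 ->
     (forall t, 0 <= t <= 1 ->
        s t = W1 tl hd (f 0) (f 1) /\ 0 < W1 tl hd (f 0) (f 1)) /\
     let v := fun t k => Num.sg (tails tl hd df t (hd k)) * s t in
     let g := fun t k => `|tails tl hd df t (hd k)| / s t in
     [/\ forall k, measurable_fun (`[0%R, 1%R]%classic : set R) (fun t : R => v t k),
         forall k, measurable_fun (`[0%R, 1%R]%classic : set R) (fun t : R => g t k),
         forall t, 0 <= t <= 1 -> isProb (g t),
         transport_eq tl hd df v g &
         forall q : R, 1 <= q -> Iq v g q = W1 tl hd (f 0) (f 1)]).
Proof.
move=> Htree Horient f_prob f_C1 s.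
split=> [t t01|f_geo f_ends]; first exact: metric_speed_tails.
have W_gt0 := W1_ends_gt0 Htree Horient f_prob f_ends.
split=> [t t01|v g].
  by split; [exact: (speed_geodesic Htree Horient f_prob f_C1 f_geo t01)|].
split.
- exact: measurable_velocity Htree Horient f_prob f_C1 f_geo.
- exact: measurable_edge_weight Htree Horient f_prob f_C1 f_geo.
- exact: isProb_edge_weight Htree Horient f_prob f_C1 f_geo f_ends.
- exact: transport_eq_geodesic Htree Horient f_prob f_C1 f_geo f_ends.
- exact: Iq_geodesic Htree Horient f_prob f_C1 f_geo f_ends.
Qed.
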